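(* If $C$ is any homogeneous binary perfect code of length $n$ (containing $0^n$), then the Vasil'ev code $V_C^0=\{(x+y,\ |x|,\ x)\mid x\in F^n,\ y\in C\}$ of length $2n+1$ is homogeneous.
   Context: $|x|=x_1+\dots+x_n\pmod 2$. For a binary perfect code $C$ of length $m$ and $y\in C$, $STS(C,y)=\{\mathrm{supp}(x+y)\mid x\in C,\ d(x,y)=3\}$, with $d$ the Hamming distance. A perfect code $C$ containing $0^m$ is homogeneous if for every $y\in C$ there is a permutation $\pi\in S_m$ with $\pi(STS(C,y))=STS(C,0^m)$. *)

(* Binary words of length m are {ffun 'I_m -> bool},
   bool playing the role of F = GF(2) (addition = xor, (+) ). *)
From mathcomp Require Import all_boot fingroup perm.
Set Implicit Arguments. Unset Strict Implicit. Unset Printing Implicit Defensive.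

Definition word (m : nat) := {ffun 'I_m -> bool}.

Definition zero_word (m : nat) : word m := [ffun _ => false].

Definition wadd (m : nat) (x y : word m) : word m := [ffun i => x i (+) y i].

Definition supp (m : nat) (x : word m) : {set 'I_m} := [set i | x i].

Definition hdist (m : nat) (x y : word m) : nat := #|supp (wadd x y)|.

Definition wparity (m : nat) (x : word m) : bool := \big[xorb/false]_(i < m) x i.

Definition perfect_code (m : nat) (C : {set word m}) : Prop :=
  forall x : word m, #|[set c in C | hdist x c <= 1]| = 1.

Definition STS (m : nat) (C : {set word m}) (y : word m) : {set {set 'I_m}} :=
  [set supp (wadd x y) | x in [set x in C | hdist x y == 3]].

Definition perm_family (m : nat) (pi : {perm 'I_m}) (S : {set {set 'I_m}})
  : {set {set 'I_m}} := [set [set pi i | i in B] | B : {set 'I_m} in S].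

Definition homogeneous (m : nat) (C : {set word m}) : Prop :=
  [/\ perfect_code C, zero_word m \in C &
      forall y, y \in C -> exists pi : {perm 'I_m},
          perm_family pi (STS C y) = STS C (zero_word m)].

Definition concat3 (n : nat) (u : word n) (b : bool) (v : word n)
  : word (n + (1 + n)) :=
  [ffun i => match split i with
             | inl j => u j
             | inr k => match split k with
                        | inl _ => b
                        | inr j => v j
                        end
             end].

Definition vasilev0 (n : nat) (C : {set word n}) : {set word (n + (1 + n))} :=
  [set concat3 (wadd x y) (wparity x) x | x in [set: word n], y in C].

(* If y = (x + c, |x|, x) is a codeword of the Vasil'ev code, a triple B of coordinates lies
   in STS(V, y) iff y + 1_B is a codeword, i.e. iff c + t is in C and the middle bit of 1_B
   equals the parity of its right half, where t is the sum of the two halves of 1_B. The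
   second condition does not involve y, and t has weight at most 3, so c + t is in C iff
   pi(t) is, where pi maps STS(C, c) onto STS(C, 0^n): weights 1 and 2 are excluded by the
   minimum distance 3 of a perfect code. Applying pi to both halves and fixing the middle
   coordinate therefore maps STS(V, y) onto STS(V, 0^(2n+1)). *)
From mathcomp Require Import all_boot fingroup perm.
From mathcomp Require Import zify.
Set Implicit Arguments. Unset Strict Implicit. Unset Printing Implicit Defensive.

Section Words.

Variable m : nat.
Implicit Types (x y z t : word m) (B : {set 'I_m}) (C : {set word m}).

Definition wt x : nat := \sum_(i < m) x i.
Definition chr B : word m := [ffun i => i \in B].
Definition e1 (i : 'I_m) : word m := chr [set i].

Lemma waddC x y : wadd x y = wadd y x.
Proof. by apply/ffunP => i; rewrite !ffunE addbC. Qed.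

Lemma wadd0 x : wadd (zero_word m) x = x.
Proof. by apply/ffunP => i; rewrite !ffunE. Qed.

Lemma waddr0 x : wadd x (zero_word m) = x.
Proof. by rewrite waddC wadd0. Qed.

Lemma waddxx x : wadd x x = zero_word m.
Proof. by apply/ffunP => i; rewrite !ffunE addbb. Qed.

Lemma waddK x y : wadd x (wadd x y) = y.
Proof. by apply/ffunP => i; rewrite !ffunE addKb. Qed.

Lemma waddKr x y : wadd (wadd x y) y = x.
Proof. by apply/ffunP => i; rewrite !ffunE addbK. Qed.

Lemma waddKK x y z : wadd (wadd x y) (wadd x z) = wadd y z.
Proof. by apply/ffunP => i; rewrite !ffunE addbACA addbb. Qed.

Lemma supp_chr B : supp (chr B) = B.
Proof. by apply/setP => i; rewrite /supp inE ffunE. Qed.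

Lemma chr_supp x : chr (supp x) = x.
Proof. by apply/ffunP => i; rewrite ffunE /supp inE. Qed.

Lemma wt_supp x : wt x = #|supp x|.
Proof.
apply/esym; rewrite -sum1_card /wt big_mkcond /=; apply: eq_bigr => i _.
by rewrite /supp inE; case: (x i).
Qed.

Lemma wt_chr B : wt (chr B) = #|B|.
Proof. by rewrite wt_supp supp_chr. Qed.

Lemma wt_e1 i : wt (e1 i) = 1.
Proof. by rewrite wt_chr cards1. Qed.

Lemma hdistE x y : hdist x y = wt (wadd x y).
Proof. by rewrite /hdist wt_supp. Qed.

Lemma hdist_wadd x t : hdist x (wadd x t) = wt t.
Proof. by rewrite hdistE waddK. Qed.

Lemma wt0 : wt (zero_word m) = 0.
Proof. by rewrite /wt big1 // => i _; rewrite ffunE. Qed.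

Lemma wt_eq0 x : (wt x == 0) = (x == zero_word m).
Proof.
rewrite /wt sum_nat_eq0; apply/forallP/eqP => [x0|-> i]; last by rewrite ffunE.
by apply/ffunP => i; rewrite ffunE; move: (x0 i); case: (x i).
Qed.

Lemma wt_wadd x y : wt (wadd x y) <= wt x + wt y.
Proof.
rewrite /wt -big_split /=; apply: leq_sum => i _; rewrite ffunE.
by case: (x i); case: (y i).
Qed.

Lemma wt_le1P t : wt t <= 1 -> t = zero_word m \/ exists i, t = e1 i.
Proof.
rewrite leq_eqVlt ltnS leqn0 wt_eq0 => /orP[|/eqP]; last by left.
by rewrite wt_supp => /cards1P[i ti]; right; exists i; rewrite /e1 -ti chr_supp.
Qed.

Lemma wt_e1_wadd i t : t i -> wt (wadd (e1 i) t) = (wt t).-1.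
Proof.
move=> ti; rewrite /wt (bigD1 i) //= [in RHS](bigD1 i) //= !ffunE ti inE eqxx /=.
by congr _; apply: eq_bigr => j ji; rewrite !ffunE inE (negbTE ji).
Qed.

Lemma wparityE x : wparity x = odd (wt x).
Proof.
rewrite /wt (big_morph odd oddD (erefl : odd 0 = false)) /wparity.
by elim/big_rec2: _ => // i a b _ ->; rewrite oddb; case: (x i); case: b.
Qed.

Lemma wparity_wadd x y : wparity (wadd x y) = wparity x (+) wparity y.
Proof.
rewrite !wparityE /wt -oddD -big_split /= !(big_morph odd oddD (erefl : odd 0 = false)).
by apply: eq_bigr => i _; rewrite ffunE; case: (x i); case: (y i).
Qed.

Lemma wparity0 : wparity (zero_word m) = false.
Proof. by rewrite wparityE wt0. Qed.

Lemma wparity_e1 i : wparity (e1 i) = true.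
Proof. by rewrite wparityE wt_e1. Qed.

End Words.

Section PerfectCodes.

Variables (m : nat) (C : {set word m}).
Implicit Types (x c t : word m).

Lemma perfect_code_uniq x c1 c2 : perfect_code C ->
  c1 \in C -> hdist x c1 <= 1 -> c2 \in C -> hdist x c2 <= 1 -> c1 = c2.
Proof.
move=> /(_ x) /eqP /cards1P[c Hc] c1C d1 c2C d2.
have : c1 \in [set c in C | hdist x c <= 1] by rewrite inE c1C.
have : c2 \in [set c in C | hdist x c <= 1] by rewrite inE c2C.
by rewrite Hc !inE => /eqP -> /eqP ->.
Qed.

Lemma perfect_code_wadd_notin c t : perfect_code C ->
  c \in C -> 0 < wt t <= 2 -> wadd c t \notin C.
Proof.
move=> pC cC /andP[t_gt0 t_le2]; apply/negP => ctC.
have [i ti] : exists i, t i.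
  apply/existsP; apply: contraTT t_gt0 => /existsPn t0.
  by rewrite -leqNgt leqn0 wt_eq0; apply/eqP/ffunP => i; rewrite ffunE; apply/negbTE.
have c_ct : c = wadd c t.
  apply: (perfect_code_uniq (x := wadd c (e1 i))) => //.
    by rewrite hdistE waddC waddK wt_e1.
  by rewrite hdistE waddKK wt_e1_wadd //; lia.
by move: t_gt0; rewrite -(waddK c t) -c_ct waddxx wt0.
Qed.

Lemma perfect_code_of_cover :
  (forall x, exists2 c, c \in C & hdist x c <= 1) ->
  (forall c t, c \in C -> 0 < wt t <= 2 -> wadd c t \notin C) ->
  perfect_code C.
Proof.
move=> cover mind x; have [c cC dc] := cover x.
apply/eqP/cards1P; exists c; apply/setP => c'; rewrite !inE.
apply/andP/eqP => [[c'C dc']|->]; last by [].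
have ct : c' = wadd c (wadd c c') by rewrite waddK.
case: (posnP (wt (wadd c c'))) => [/eqP|t_gt0].
  by rewrite wt_eq0 => /eqP t0; rewrite ct t0 waddr0.
suff : 0 < wt (wadd c c') <= 2 by move/(mind _ _ cC); rewrite -ct c'C.
rewrite t_gt0 -(waddKK x) (leq_trans (wt_wadd _ _)) // -!hdistE; lia.
Qed.

Lemma mem_STS y (B : {set 'I_m}) :
  (B \in STS C y) = (#|B| == 3) && (wadd y (chr B) \in C).
Proof.
apply/imsetP/andP => [[x]|[B3 BC]].
  rewrite inE => /andP[xC]; rewrite hdistE wt_supp => /eqP d3 ->.
  by rewrite d3 chr_supp [wadd x y]waddC waddK.
exists (wadd y (chr B)); last by rewrite [wadd _ y]waddC waddK supp_chr.
by rewrite inE BC hdistE [wadd _ y]waddC waddK wt_chr.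
Qed.

End PerfectCodes.

Section CoordinatePermutations.

Variable m : nat.
Implicit Types (s : {perm 'I_m}) (x y : word m).

Definition pw s x : word m := [ffun j => x ((s^-1)%g j)].

Lemma pw_chr s (B : {set 'I_m}) : pw s (chr B) = chr (s @: B).
Proof.
apply/ffunP => j; rewrite !ffunE -{2}[j](permKV s) mem_imset //.
exact: perm_inj.
Qed.

Lemma wt_pw s x : wt (pw s x) = wt x.
Proof.
rewrite /wt (reindex_inj (@perm_inj _ s)) /=; apply: eq_bigr => j _.
by rewrite ffunE permK.
Qed.

Lemma wparity_pw s x : wparity (pw s x) = wparity x.
Proof. by rewrite !wparityE wt_pw. Qed.

Lemma pw_wadd s x y : pw s (wadd x y) = wadd (pw s x) (pw s y).
Proof. by apply/ffunP => j; rewrite !ffunE. Qed.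

Lemma pw0 s : pw s (zero_word m) = zero_word m.
Proof. by apply/ffunP => j; rewrite !ffunE. Qed.

Lemma perm_familyE s (S T : {set {set 'I_m}}) :
  (forall B, (B \in S) = (s @: B \in T)) -> perm_family s S = T.
Proof.
move=> ST; have sK (B : {set 'I_m}) : s @: ((s^-1)%g @: B) = B.
  by rewrite -imset_comp (eq_imset _ (permKV s)) imset_id.
apply/setP => D; apply/imsetP/idP => [[B BS ->]|DT]; first by rewrite -ST.
by exists ((s^-1)%g @: D); rewrite ?ST sK.
Qed.

(* Translating by c and permuting by s agree on words of weight at most 3: weight 3 is
   the hypothesis on the Steiner triple systems, weights 1 and 2 never give codewords. *)
Lemma perm_STS_mem_wadd (C : {set word m}) c s t :
  perfect_code C -> c \in C -> zero_word m \in C ->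
  perm_family s (STS C c) = STS C (zero_word m) -> wt t <= 3 ->
  (wadd c t \in C) = (pw s t \in C).
Proof.
move=> pC cC zC sSTS t_le3.
have notin u v : u \in C -> 0 < wt v <= 2 -> (wadd u v \in C) = false.
  by move=> uC v12; apply/negbTE/perfect_code_wadd_notin.
case: (ltnP 2 (wt t)) => [t3 | t_le2].
  have wt3 : #|supp t| == 3 by rewrite -wt_supp eqn_leq t_le3.
  have -> : (wadd c t \in C) = (supp t \in STS C c).
    by rewrite mem_STS wt3 chr_supp.
  have -> : (pw s t \in C) = (s @: supp t \in STS C (zero_word m)).
    by rewrite mem_STS card_imset ?wt3 -?pw_chr ?chr_supp ?wadd0 //; exact: perm_inj.
  by rewrite -sSTS mem_imset //; exact/imset_inj/perm_inj.
case: (posnP (wt t)) => [/eqP|t_gt0].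
  by rewrite wt_eq0 => /eqP ->; rewrite waddr0 pw0 cC zC.
have t12 : 0 < wt t <= 2 by rewrite t_gt0.
by rewrite notin // -(wadd0 (pw s t)) notin // wt_pw.
Qed.

End CoordinatePermutations.
Section Vasilev.

Variable n : nat.
Local Notation N := (n + (1 + n)).
Implicit Types (u v : word n) (w a : word N) (C : {set word n}).

Definition lidx (j : 'I_n) : 'I_N := lshift (1 + n) j.
Definition midx : 'I_N := rshift n (lshift n (ord0 : 'I_1)).
Definition ridx (j : 'I_n) : 'I_N := rshift n (rshift 1 j).

Definition wleft w : word n := [ffun j => w (lidx j)].
Definition wmid w : bool := w midx.
Definition wright w : word n := [ffun j => w (ridx j)].

(* A word (u, b, v) is in V_C^0 iff u + v is in C and b = |v|. *)
Definition vsum w : word n := wadd (wleft w) (wright w).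
Definition vcheck w : bool := wmid w (+) wparity (wright w).

Lemma split_lshift p q (j : 'I_p) : split (lshift q j) = inl j.
Proof. exact: (unsplitK (inl j : 'I_p + 'I_q)). Qed.

Lemma split_rshift p q (k : 'I_q) : split (rshift p k) = inr k.
Proof. exact: (unsplitK (inr k : 'I_p + 'I_q)). Qed.

Lemma wleft_concat3 u b v : wleft (concat3 u b v) = u.
Proof. by apply/ffunP => j; rewrite !ffunE split_lshift. Qed.

Lemma wmid_concat3 u b v : wmid (concat3 u b v) = b.
Proof. by rewrite /wmid ffunE split_rshift split_lshift. Qed.

Lemma wright_concat3 u b v : wright (concat3 u b v) = v.
Proof. by apply/ffunP => j; rewrite !ffunE !split_rshift. Qed.

Lemma concat3_eta w : w = concat3 (wleft w) (wmid w) (wright w).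
Proof.
apply/ffunP => i; rewrite ffunE -[i]splitK; case: (split i) => [j|k] /=.
  by rewrite split_lshift ffunE.
rewrite split_rshift -[k]splitK; case: (split k) => [o|j] /=.
  by rewrite split_lshift /wmid (ord1 o).
by rewrite split_rshift ffunE.
Qed.

Lemma wt_split w : wt w = wt (wleft w) + wmid w + wt (wright w).
Proof.
rewrite /wt big_split_ord /= big_split_ord /= big_ord1 addnA.
by congr (_ + _ + _); apply: eq_bigr => j _; rewrite ffunE.
Qed.

Lemma wt_vsum w : wt (vsum w) <= wt w.
Proof. by rewrite (leq_trans (wt_wadd _ _)) // wt_split; lia. Qed.

Lemma vsum_wadd w a : vsum (wadd w a) = wadd (vsum w) (vsum a).
Proof. by apply/ffunP => j; rewrite !ffunE addbACA. Qed.

Lemma vcheck_wadd w a : vcheck (wadd w a) = vcheck w (+) vcheck a.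
Proof.
rewrite /vcheck; have -> : wright (wadd w a) = wadd (wright w) (wright a).
  by apply/ffunP => j; rewrite !ffunE.
by rewrite wparity_wadd /wmid ffunE addbACA.
Qed.

Lemma vsum0 : vsum (zero_word N) = zero_word n.
Proof. by apply/ffunP => j; rewrite !ffunE. Qed.

Lemma vcheck0 : vcheck (zero_word N) = false.
Proof.
rewrite /vcheck; have -> : wright (zero_word N) = zero_word n.
  by apply/ffunP => j; rewrite !ffunE.
by rewrite wparity0 /wmid ffunE.
Qed.

Lemma mem_vasilev0 C w : (w \in vasilev0 C) = (vsum w \in C) && ~~ vcheck w.
Proof.
rewrite /vsum /vcheck; apply/imset2P/andP => [[x y _ yC ->]|[zC check_w]].
  by rewrite wleft_concat3 wmid_concat3 wright_concat3 waddC waddK addbb.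
have mw : wmid w = wparity (wright w) by move: check_w; case: (wmid w); case: wparity.
exists (wright w) (wadd (wleft w) (wright w)) => //.
by rewrite {1}[w]concat3_eta mw waddC waddKr.
Qed.

Lemma mem_vasilev0_wadd C w a : w \in vasilev0 C ->
  (wadd w a \in vasilev0 C) = (wadd (vsum w) (vsum a) \in C) && ~~ vcheck a.
Proof.
by rewrite !mem_vasilev0 vsum_wadd vcheck_wadd => /andP[_ /negbTE ->].
Qed.

Lemma vcheck_vsum0 a : vsum a = zero_word n -> 0 < wt a <= 2 -> vcheck a.
Proof.
move=> a0; have lr : wleft a = wright a.
  by rewrite -[wleft a](waddKr _ (wright a)); move: a0; rewrite /vsum => ->; rewrite wadd0.
rewrite /vcheck wparityE wt_split lr.
by case: (wmid a); case: (wt (wright a)) => [|[|k]] //=; lia.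
Qed.

Lemma vasilev0_wadd_notin C c a : perfect_code C ->
  c \in vasilev0 C -> 0 < wt a <= 2 -> wadd c a \notin vasilev0 C.
Proof.
move=> pC cV a12; rewrite mem_vasilev0_wadd // negb_and negbK.
case: (posnP (wt (vsum a))) => [/eqP|sa_gt0].
  by rewrite wt_eq0 => /eqP /vcheck_vsum0 ->; rewrite ?orbT.
apply/orP; left; apply: perfect_code_wadd_notin => //.
  by move: cV; rewrite mem_vasilev0 => /andP[].
by rewrite sa_gt0 (leq_trans (wt_vsum a)) //; case/andP: a12.
Qed.

Lemma vsum_e1_lidx j : vsum (e1 (lidx j)) = e1 j.
Proof. by apply/ffunP => k; rewrite !ffunE !inE eq_rlshift eq_lshift addbF. Qed.

Lemma vsum_e1_ridx j : vsum (e1 (ridx j)) = e1 j.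
Proof. by apply/ffunP => k; rewrite !ffunE !inE eq_lrshift !eq_rshift. Qed.

Lemma vsum_e1_midx : vsum (e1 midx) = zero_word n.
Proof. by apply/ffunP => k; rewrite !ffunE !inE eq_lrshift eq_rshift eq_rlshift. Qed.

Lemma vcheck_e1_lidx j : vcheck (e1 (lidx j)) = false.
Proof.
rewrite /vcheck (_ : wright _ = zero_word n) ?wparity0.
  by rewrite /wmid ffunE inE eq_rlshift.
by apply/ffunP => k; rewrite !ffunE inE eq_rlshift.
Qed.

Lemma vcheck_e1_ridx j : vcheck (e1 (ridx j)) = true.
Proof.
rewrite /vcheck (_ : wright _ = e1 j) ?wparity_e1.
  by rewrite /wmid ffunE inE eq_rshift eq_lrshift.
by apply/ffunP => k; rewrite !ffunE !inE !eq_rshift.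
Qed.

Lemma vcheck_e1_midx : vcheck (e1 midx) = true.
Proof.
rewrite /vcheck (_ : wright _ = zero_word n) ?wparity0.
  by rewrite /wmid ffunE inE eqxx.
by apply/ffunP => k; rewrite !ffunE inE eq_rshift eq_rlshift.
Qed.

Lemma vasilev0_correction t b :
  wt t <= 1 -> exists2 a, wt a <= 1 & vsum a = t /\ vcheck a = b.
Proof.
case/wt_le1P => [->|[j ->]]; case: b.
- by exists (e1 midx); rewrite ?wt_e1 ?vsum_e1_midx ?vcheck_e1_midx.
- by exists (zero_word N); rewrite ?wt0 ?vsum0 ?vcheck0.
- by exists (e1 (ridx j)); rewrite ?wt_e1 ?vsum_e1_ridx ?vcheck_e1_ridx.
- by exists (e1 (lidx j)); rewrite ?wt_e1 ?vsum_e1_lidx ?vcheck_e1_lidx.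
Qed.

(* Correct w towards the codeword of C nearest to vsum w, fixing the check bit on the way. *)
Lemma vasilev0_cover C w : perfect_code C ->
  exists2 c, c \in vasilev0 C & hdist w c <= 1.
Proof.
move=> pC; have /eqP/cards1P[c Hc] := pC (vsum w).
have : c \in [set c in C | hdist (vsum w) c <= 1] by rewrite Hc set11.
rewrite inE hdistE => /andP[cC dc].
have [a a_le1 [sa ca]] := vasilev0_correction (vcheck w) dc.
exists (wadd w a); last by rewrite hdist_wadd.
by rewrite mem_vasilev0 vsum_wadd vcheck_wadd sa ca waddK cC addbb.
Qed.

Lemma perfect_vasilev0 C : perfect_code C -> perfect_code (vasilev0 C).
Proof.
move=> pC; apply: perfect_code_of_cover => [w|c a]; first exact: vasilev0_cover.
exact: vasilev0_wadd_notin.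
Qed.

Lemma zero_vasilev0 C : zero_word n \in C -> zero_word N \in vasilev0 C.
Proof. by move=> zC; rewrite mem_vasilev0 vsum0 vcheck0 zC. Qed.

Definition vext (s : {perm 'I_n}) (i : 'I_N) : 'I_N :=
  match split i with
  | inl j => lidx (s j)
  | inr k => match split k with inl _ => midx | inr j => ridx (s j) end
  end.

Lemma vextK s : cancel (vext s) (vext (s^-1)%g).
Proof.
move=> i; rewrite /vext -[i]splitK; case: (split i) => [j|k] /=.
  by rewrite /lidx !split_lshift permK.
rewrite -[k]splitK; case: (split k) => [o|j] /=.
  by rewrite /midx !(split_rshift, split_lshift) (ord1 o).
by rewrite /ridx !split_rshift permK.
Qed.

Definition pext s : {perm 'I_N} := perm (can_inj (vextK s)).

Lemma pext_lidx s j : pext s (lidx j) = lidx (s j).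
Proof. by rewrite permE /vext split_lshift. Qed.

Lemma pext_ridx s j : pext s (ridx j) = ridx (s j).
Proof. by rewrite permE /vext !split_rshift. Qed.

Lemma pext_midx s : pext s midx = midx.
Proof. by rewrite permE /vext split_rshift split_lshift. Qed.

Lemma vsum_pw_pext s w : vsum (pw (pext s) w) = pw s (vsum w).
Proof.
rewrite /vsum pw_wadd; congr wadd; apply/ffunP => j; rewrite !ffunE -{1}[j](permKV s).
  by rewrite -pext_lidx permK.
by rewrite -pext_ridx permK.
Qed.

Lemma vcheck_pw_pext s w : vcheck (pw (pext s) w) = vcheck w.
Proof.
rewrite /vcheck; have -> : wright (pw (pext s) w) = pw s (wright w).
  by apply/ffunP => j; rewrite !ffunE -{1}[j](permKV s) -pext_ridx permK.
by rewrite wparity_pw /wmid ffunE -{1}(pext_midx s) permK.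
Qed.

End Vasilev.

Theorem theorem3 (n : nat) (C : {set word n}) :
  homogeneous C -> homogeneous (vasilev0 C).
Proof.
move=> [pC zC homC]; split; [exact: perfect_vasilev0 | exact: zero_vasilev0 |].
move=> y yV; have /andP[yC _] : (vsum y \in C) && ~~ vcheck y by rewrite -mem_vasilev0.
have [s sSTS] := homC _ yC.
exists (pext s); apply: perm_familyE => B.
rewrite !mem_STS card_imset; last exact: perm_inj.
rewrite -pw_chr !mem_vasilev0_wadd ?zero_vasilev0 //.
rewrite vsum0 wadd0 vsum_pw_pext vcheck_pw_pext.
case: eqP => //= B3; congr (_ && _); apply: perm_STS_mem_wadd => //.
by rewrite -B3 -wt_chr wt_vsum.
Qed.
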